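(* Let $G$ be a weighted undirected graph on $n$ vertices with graph Laplacian $L$, let $\pi$ be a partition of its vertex set with indicator matrix $P$ and quotient Laplacian $L^\pi$, and let $E=LP-PL^\pi$. Let $(\lambda,v)$ be an eigenvalue–eigenvector pair of $L^\pi$ and suppose the equitable error satisfies $\|Ev\|\le\delta$. Let $x_1,\dots,x_n$ be an orthonormal eigenbasis of $L$ with $Lx_i=\lambda_ix_i$, let $\gamma>0$, let $\mathcal{A}=\{i:|\lambda_i-\lambda|<\gamma\}$, $m=|\mathcal{A}|$, and $u=\sum_{i\in\mathcal{A}}\langle Pv,x_i\rangle x_i$. Then $$\|Pv-u\|\le\frac{\delta}{\gamma}\sqrt{n-m}.$$
   Context: The graph Laplacian is $L=D-A$, with $A$ the weighted adjacency matrix and $D$ the diagonal matrix of its row sums. For a partition $\pi=\{V_1,\dots,V_k\}$ of the vertices, the indicator matrix $P\in\mathbb{R}^{n\times k}$ has $P_{il}=1$ if $v_i\in V_l$ and $0$ otherwise, and the quotient Laplacian is $L^\pi=(P^TP)^{-1}P^TLP$. The vector $Ev$ is called the equitable error of $v$. $\|\cdot\|$ denotes the Euclidean norm. *)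

From HB Require Import structures.
From mathcomp Require Import all_boot all_order all_algebra.
Set Implicit Arguments. Unset Strict Implicit. Unset Printing Implicit Defensive.
Import Order.TTheory GRing.Theory Num.Theory.
Local Open Scope ring_scope.

Definition laplacian (R : rcfType) (n : nat) (A : 'M[R]_n) : 'M[R]_n :=
  diag_mx (\row_i \sum_j A i j) - A.

Definition indicator (R : rcfType) (n k : nat) (part : 'I_n -> 'I_k) : 'M[R]_(n, k) :=
  \matrix_(i, l) (part i == l)%:R.

Definition quotient_laplacian (R : rcfType) (n k : nat) (L : 'M[R]_n)
  (P : 'M[R]_(n, k)) : 'M[R]_k :=
  invmx (P^T *m P) *m P^T *m L *m P.

Definition vnorm (R : rcfType) (n : nat) (x : 'cV[R]_n) : R :=
  Num.sqrt (\sum_i (x i 0) ^+ 2).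

Definition vdot (R : rcfType) (n : nat) (x y : 'cV[R]_n) : R :=
  \sum_i x i 0 * y i 0.

From HB Require Import structures.
From mathcomp Require Import all_boot all_order all_algebra.
Set Implicit Arguments. Unset Strict Implicit. Unset Printing Implicit Defensive.
Import Order.TTheory GRing.Theory Num.Theory.
Local Open Scope ring_scope.

(** Write [w = P v]. Since [L^pi v = lambda v], the equitable error is the
    eigen-residual [E v = L w - lambda w]. In the orthonormal eigenbasis of the
    symmetric [L] its [i]-th coordinate is [(lambda_i - lambda) <w, x_i>], so
    for every [i] outside [cA] we get [gamma |<w, x_i>| <= |E v| <= delta].
    The vector [w - u] has exactly these [n - m] coordinates, each at most
    [delta / gamma] in absolute value. *)

Section EuclideanNorm.

Variable R : rcfType.

Lemma vnorm_ge0 n (x : 'cV[R]_n) : 0 <= vnorm x.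
Proof. exact: sqrtr_ge0. Qed.

Lemma sum_sqr_cV n (x : 'cV[R]_n) : \sum_i x i 0 ^+ 2 = (x^T *m x) 0 0.
Proof. by rewrite mxE; apply: eq_bigr => i _; rewrite mxE expr2. Qed.

Lemma vnorm_orthogonal_mul n (X : 'M[R]_n) (x : 'cV[R]_n) :
  X^T *m X = 1%:M -> vnorm (X *m x) = vnorm x.
Proof.
by move=> XX; rewrite /vnorm !sum_sqr_cV trmx_mul -mulmxA (mulmxA X^T) XX mul1mx.
Qed.

Lemma coord_le_vnorm n (x : 'cV[R]_n) i : `|x i 0| <= vnorm x.
Proof.
rewrite -sqrtr_sqr ler_sqrt ?sumr_ge0 // => [|j _]; last exact: sqr_ge0.
by rewrite (bigD1 i) //= lerDl sumr_ge0 // => j _; exact: sqr_ge0.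
Qed.

Lemma vnorm_le_support n (x : 'cV[R]_n) (S : {set 'I_n}) (b : R) :
  0 <= b -> (forall i, i \notin S -> x i 0 = 0) -> (forall i, `|x i 0| <= b) ->
  vnorm x <= b * Num.sqrt #|S|%:R.
Proof.
move=> b0 xS xb; rewrite -(ger0_norm b0) -sqrtr_sqr -sqrtrM ?sqr_ge0 //.
rewrite ler_sqrt ?mulr_ge0 ?sqr_ge0 //.
rewrite (bigID (mem S)) /= [X in _ + X]big1 ?addr0 => [|i /xS ->]; last by rewrite expr0n.
rewrite mulr_natr -sumr_const; apply: ler_sum => i _.
by rewrite -real_normK ?num_real // lerXn2r ?nnegrE.
Qed.

End EuclideanNorm.

Section OrthonormalEigenbasis.

Variables (R : rcfType) (n : nat) (X : 'M[R]_n).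
Hypothesis X_orthonormal : X^T *m X = 1%:M.

Lemma spectral_projection_residual (w : 'cV[R]_n) (S : {set 'I_n}) :
  w - \sum_(i in S) vdot w (col i X) *: col i X
  = X *m \col_i (if i \in S then 0 else (X^T *m w) i 0).
Proof.
set c := X^T *m w.
have coord i : vdot w (col i X) = c i 0.
  by rewrite mxE; apply: eq_bigr => l _; rewrite !mxE mulrC.
have {1}-> : w = X *m c by rewrite mulmxA (mulmx1C X_orthonormal) mul1mx.
apply/matrixP => j z; rewrite (ord1 z) !mxE summxE [X in _ - X]big_mkcond -sumrB.
apply: eq_bigr => i _; rewrite [in RHS]mxE [in X in _ - X]mxE coord [col i X j 0]mxE.
by case: (i \in S); rewrite ?mulr0 ?subr0 // mulrC subrr.
Qed.

Variables (L : 'M[R]_n) (lam : 'I_n -> R).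
Hypothesis L_sym : L^T = L.
Hypothesis X_eigen : forall i, L *m col i X = lam i *: col i X.

Lemma eigen_coord_residual (w : 'cV[R]_n) (mu : R) i :
  (X^T *m (L *m w - mu *: w)) i 0 = (lam i - mu) * (X^T *m w) i 0.
Proof.
have rowXL : row i (X^T *m L) = lam i *: row i X^T.
  by rewrite row_mul -tr_col -[L]L_sym -trmx_mul X_eigen linearZ /= tr_col.
have : row i (X^T *m (L *m w - mu *: w)) = (lam i - mu) *: row i (X^T *m w).
  rewrite mulmxBr mulmxA -scalemxAr linearB linearZ /= [row i (_ *m w)]row_mul rowXL.
  by rewrite -scalemxAl -row_mul scalerBl.
by move/matrixP/(_ 0 0); rewrite [in RHS]mxE ![row _ _ 0 0]mxE.
Qed.

Lemma eigen_coord_gap (w : 'cV[R]_n) (mu gamma : R) i :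
  gamma <= `|lam i - mu| ->
  gamma * `|(X^T *m w) i 0| <= vnorm (L *m w - mu *: w).
Proof.
move=> gap; have XXt : X^T^T *m X^T = 1%:M by rewrite trmxK mulmx1C.
rewrite -(vnorm_orthogonal_mul _ XXt); apply: le_trans (coord_le_vnorm _ i).
by rewrite eigen_coord_residual normrM ler_wpM2r.
Qed.

End OrthonormalEigenbasis.

Lemma laplacian_sym (R : rcfType) n (A : 'M[R]_n) : A^T = A -> (laplacian A)^T = laplacian A.
Proof. by move=> AT; rewrite /laplacian linearB /= tr_diag_mx AT. Qed.

Lemma equitable_error_eigen (R : rcfType) n k (L : 'M[R]_n) (P : 'M[R]_(n, k))
    (M : 'M[R]_k) (lambda : R) (v : 'cV[R]_k) :
  M *m v = lambda *: v -> (L *m P - P *m M) *m v = L *m (P *m v) - lambda *: (P *m v).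
Proof. by move=> Mv; rewrite mulmxBl -!mulmxA Mv scalemxAr. Qed.

Theorem mainTheorem8 (R : rcfType) (n k : nat) (A : 'M[R]_n)
  (part : 'I_n -> 'I_k)
  (lambda : R) (v : 'cV[R]_k) (delta : R)
  (X : 'M[R]_n) (lam : 'I_n -> R) (gamma : R) :
  (* weighted undirected graph: symmetric, nonnegative weights *)
  A^T = A ->
  (forall i j, 0 <= A i j) ->
  (* pi is a partition: every block V_l is nonempty *)
  (forall l : 'I_k, exists i : 'I_n, part i = l) ->
  let L := laplacian A in
  let P : 'M[R]_(n, k) := indicator R part in
  let Lpi := quotient_laplacian L P in
  let E := L *m P - P *m Lpi in
  (* (lambda, v) eigenpair of L^pi *)
  v != 0 ->
  Lpi *m v = lambda *: v ->
  vnorm (E *m v) <= delta ->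
  (* columns of X form an orthonormal eigenbasis of L *)
  X^T *m X = 1%:M ->
  (forall i : 'I_n, L *m col i X = lam i *: col i X) ->
  0 < gamma ->
  let cA := [set i : 'I_n | `|lam i - lambda| < gamma] in
  let m := #|cA| in
  let u := \sum_(i in cA) vdot (P *m v) (col i X) *: col i X in
  vnorm (P *m v - u) <= delta / gamma * Num.sqrt ((n - m)%:R).
Proof.
move=> AT _ _ L P Lpi E _ Lpi_v Ev_delta XX X_eigen gamma_gt0.
rewrite /E (equitable_error_eigen _ _ Lpi_v) in Ev_delta; cbv zeta.
set cA := [set i | _].
have bound_ge0 : 0 <= delta / gamma.
  by apply: divr_ge0; [exact: le_trans (vnorm_ge0 _) Ev_delta | exact: ltW].
rewrite spectral_projection_residual // vnorm_orthogonal_mul //.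
have -> : (n - #|cA|)%N = #|~: cA| by rewrite -[n in (n - _)%N]card_ord -(cardsC cA) addKn.
apply: vnorm_le_support => // i; rewrite mxE; first by rewrite inE negbK => ->.
case: ifP => [_|]; first by rewrite normr0.
rewrite inE => /negbT; rewrite -leNgt => gap.
rewrite ler_pdivlMr // mulrC; apply: le_trans Ev_delta.
exact: (eigen_coord_gap XX (laplacian_sym AT) X_eigen).
Qed.
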